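(* Let $n\ge 2$, let $T=\{1,\dots,n\}$ and let $\mathcal T$ be a topology on $T$. Fix an integer $k\ge 1$ and let $X_{k-1}$ be the set of old points at stage $k$. For each $i\in\{1,\dots,n-1\}\setminus X_{k-1}$ let $N_i$ be the number of new open $k$-sets of the quotient space $Q^{i}$. Then there is an integer $s\ge 0$ (depending on $k$) such that $N_i\in\{s,s+1,s+2\}$ for every $i\in\{1,\dots,n-1\}\setminus X_{k-1}$.
   Context: For $\alpha\in T$, $\alpha^{*}$ denotes the smallest open set of $\mathcal T$ containing $\alpha$. For an integer $m\ge 0$, an $m$-system is an open set $P$ of $\mathcal T$ such that $P\setminus\{n\}$ has exactly $m$ points; upper if $n\notin P$, lower if $n\in P$. At stage $k$, a point $\alpha\neq n$ is old if $\alpha^{*}$ is an $m$-system for some $m<k$, and new if $\alpha^{*}$ is a $k$-system; $X_{k-1}$ is the set of old points. A $k$-system is new if it contains a point $p\neq n$ not contained in any $m$-system with $m\le k-1$. For $i\in\{1,\dots,n-1\}$, $Q^{i}$ is the quotient space obtained by identifying $i$ and $n$: its underlying set is $T(i,n)=\{\{z\}: z\in T\setminus\{i,n\}\}\cup\{\{i,n\}\}$ with natural map $f_i:T\to T(i,n)$, and a set $V\subseteq T(i,n)$ is open iff $f_i^{-1}(V)\in\mathcal T$. The spaces $Q^{i}$ with $i\notin X_{k-1}$ are called new quotient spaces (at stage $k$). A new open $k$-set of $Q^{i}$ is an open set $V$ of $Q^{i}$ with exactly $k$ elements such that $f_i^{-1}(V)$ is a new $k$-system of $\mathcal T$. *)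

From mathcomp Require Import all_boot.
Set Implicit Arguments. Unset Strict Implicit. Unset Printing Implicit Defensive.

Section Defs.
Variable T : finType.
(* tau : the family of open sets; nT : the distinguished point "n" *)
Variable tau : {set {set T}}.
Variable nT : T.

Definition is_topology : Prop :=
  [/\ set0 \in tau, setT \in tau,
      (forall U V, U \in tau -> V \in tau -> U :|: V \in tau)
    & (forall U V, U \in tau -> V \in tau -> U :&: V \in tau)].

Definition minopen (a : T) : {set T} := \bigcap_(U in tau | a \in U) U.

Definition is_msystem (m : nat) (P : {set T}) : bool :=
  (P \in tau) && (#|P :\ nT| == m).

Definition old_points (k : nat) : {set T} :=
  [set a | (a != nT) && [exists m : 'I_k, is_msystem m (minopen a)]].

Definition new_ksystem (k : nat) (P : {set T}) : bool :=
  is_msystem k P &&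
  [exists p in P, (p != nT) &&
     ~~ [exists m : 'I_k.-1.+1, exists Q : {set T}, is_msystem m Q && (p \in Q)]].

(* quotient Q^i identifying i and n *)
Definition qcarrier (i : T) : {set {set T}} :=
  [set [set z] | z in ~: [set i; nT]] :|: [set [set i; nT]].

Definition qmap (i : T) (z : T) : {set T} :=
  if z \in [set i; nT] then [set i; nT] else [set z].

Definition qopen (i : T) (V : {set {set T}}) : bool :=
  (V \subset qcarrier i) && (qmap i @^-1: V \in tau).

Definition num_new_open_ksets (k : nat) (i : T) : nat :=
  #|[set V : {set {set T}} | [&& qopen i V, #|V| == k &
                                 new_ksystem k (qmap i @^-1: V)]]|.
End Defs.

From mathcomp Require Import all_boot zify.

Set Implicit Arguments.
Unset Strict Implicit.
Unset Printing Implicit Defensive.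

(* A point i that is not old has at least k points other than n in its minimal
   open set, so every k-system through i agrees with that set away from n: at
   most one lower and at most one upper k-system contain i.  The open k-sets
   of Q^i correspond to the k-systems saturated for {i, n}, namely the lower
   ones containing i and the upper ones avoiding i.  Hence N_i = U + l_i - u_i,
   where U, the number of new upper k-systems, does not depend on i and
   l_i, u_i <= 1. *)

Section MinimalOpenSets.

Variables (T : finType) (tau : {set {set T}}) (nT : T).

Lemma minopen_open : is_topology tau -> forall a, minopen tau a \in tau.
Proof.
case=> _ tauT _ tauI a; apply: (big_ind (fun X => X \in tau)) => //.
by move=> U /andP[].
Qed.

Lemma minopen_min a P : P \in tau -> a \in P -> minopen tau a \subset P.
Proof. by move=> tauP aP; apply: bigcap_inf; rewrite tauP aP. Qed.

Hypothesis top_tau : is_topology tau.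

Variables (k : nat) (i : T).
Hypotheses (i_neq_n : i != nT) (i_not_old : i \notin old_points tau nT k).

Lemma ksystem_through_new_point P :
  is_msystem tau nT k P -> i \in P -> P :\ nT = minopen tau i :\ nT.
Proof.
case/andP=> tauP /eqP cardP iP.
have minopen_large : k <= #|minopen tau i :\ nT|.
  rewrite leqNgt; apply/negP => small; move: i_not_old.
  rewrite inE i_neq_n; apply/negP/negPn/existsP; exists (Ordinal small).
  by rewrite /is_msystem minopen_open // eqxx.
apply/esym/eqP; rewrite eqEcard cardP minopen_large andbT.
exact/setSD/minopen_min.
Qed.

Lemma ksystems_through_new_point_eq P Q :
  is_msystem tau nT k P -> is_msystem tau nT k Q -> i \in P -> i \in Q ->
  (nT \in P) = (nT \in Q) -> P = Q.
Proof.
move=> sysP sysQ iP iQ nPQ; apply/setP => z.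
have [->|z_neq_n] := eqVneq z nT; first exact: nPQ.
have := ksystem_through_new_point sysP iP.
rewrite -(ksystem_through_new_point sysQ iQ) => /setP/(_ z).
by rewrite !inE z_neq_n.
Qed.

Lemma card_ksystems_through_new_point (F : {set {set T}}) :
  {in F, forall P : {set T}, is_msystem tau nT k P && (i \in P)} ->
  {in F &, forall P Q : {set T}, (nT \in P) = (nT \in Q)} -> #|F| <= 1.
Proof.
move=> sysF sideF; apply/card_le1_eqP => Q P FQ FP.
case/andP: (sysF P FP) => sysP iP; case/andP: (sysF Q FQ) => sysQ iQ.
exact: (ksystems_through_new_point_eq sysP sysQ iP iQ (sideF P Q FP FQ)).
Qed.

End MinimalOpenSets.

Section Quotient.

Variables (T : finType) (nT i : T).
Hypothesis i_neq_n : i != nT.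

Lemma mem_qmap z : z \in qmap nT i z.
Proof. by rewrite /qmap; case: ifP => // _; apply: set11. Qed.

Lemma qmapD1 z : z != nT -> qmap nT i z :\ nT = [set z].
Proof.
move=> z_neq_n; apply/setP => y; rewrite /qmap in_set2 (negbTE z_neq_n) orbF.
have [->|z_neq_i] := eqVneq z i; rewrite !inE.
  by case: eqVneq => [->|_]; rewrite ?orbF // eq_sym (negbTE i_neq_n).
by case: eqVneq => [->|_]; rewrite // eq_sym (negbTE z_neq_n).
Qed.

Lemma qmap_inj : {in [pred z | z != nT] &, injective (qmap nT i)}.
Proof.
by move=> z w zn wn e; apply: set1_inj; rewrite -(qmapD1 zn) -(qmapD1 wn) e.
Qed.

Lemma qmap_preimageK (V : {set {set T}}) :
  V \subset qcarrier nT i -> qmap nT i @: ((qmap nT i @^-1: V) :\ nT) = V.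
Proof.
move=> sub_V; apply/setP => v; apply/imsetP/idP => [[z]|Vv].
  by rewrite !inE => /andP[_ Vz] ->.
have := subsetP sub_V v Vv; rewrite !inE => /orP[/imsetP[z]|/eqP v_eq].
  rewrite !inE negb_or => /andP[z_neq_i z_neq_n] v_eq.
  have qz : qmap nT i z = v.
    by rewrite v_eq /qmap !inE (negbTE z_neq_i) (negbTE z_neq_n).
  by exists z; rewrite // !inE z_neq_n qz.
have qi : qmap nT i i = v by rewrite v_eq /qmap in_set2 eqxx.
by exists i; rewrite // !inE i_neq_n qi.
Qed.

Lemma card_qmap_preimage (V : {set {set T}}) :
  V \subset qcarrier nT i -> #|(qmap nT i @^-1: V) :\ nT| = #|V|.
Proof.
move=> sub_V; rewrite -{2}(qmap_preimageK sub_V) card_in_imset //.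
by move=> z w; rewrite !inE => /andP[zn _] /andP[wn _]; apply: qmap_inj.
Qed.

Lemma qmap_preimage_saturated (V : {set {set T}}) :
  (i \in qmap nT i @^-1: V) = (nT \in qmap nT i @^-1: V).
Proof. by rewrite !inE /qmap !in_set2 !eqxx orbT. Qed.

Lemma qmap_imset_sub (P : {set T}) : qmap nT i @: P \subset qcarrier nT i.
Proof.
apply/subsetP => _ /imsetP[z _ ->]; rewrite /qcarrier /qmap.
case: ifP => z_in; rewrite in_setU ?set11 ?orbT //.
by rewrite imset_f ?in_setC ?z_in.
Qed.

Lemma qmap_imsetK (P : {set T}) :
  (i \in P) = (nT \in P) -> qmap nT i @^-1: (qmap nT i @: P) = P.
Proof.
move=> sat; apply/setP => z; rewrite inE.
apply/imsetP/idP => [[w Pw e]|]; last by exists z.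
have := mem_qmap z; rewrite e /qmap.
case: ifP => [w_in z_in|_ /set1P -> //].
suff iP : i \in P by case/set2P: z_in => ->; rewrite -?sat.
by case/set2P: w_in Pw => ->; rewrite ?sat.
Qed.

Lemma num_new_open_ksets_saturated tau k :
  num_new_open_ksets tau nT k i =
  #|[set P | new_ksystem tau nT k P && ((i \in P) == (nT \in P))]|.
Proof.
rewrite /num_new_open_ksets.
rewrite -(card_in_imset (f := fun V : {set {set T}} => qmap nT i @^-1: V)).
  apply: eq_card => P; apply/imsetP/idP => [[V]|].
    rewrite !inE => /and3P[_ _ newV] ->.
    by rewrite newV qmap_preimage_saturated eqxx.
  rewrite inE => /andP[newP /eqP sat]; exists (qmap nT i @: P); last first.
    by rewrite qmap_imsetK.
  have /andP[/andP[tauP /eqP cardP] _] := newP.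
  rewrite inE /qopen qmap_imset_sub qmap_imsetK // tauP newP andbT /=.
  by rewrite -card_qmap_preimage ?qmap_imset_sub // qmap_imsetK ?cardP ?eqxx.
move=> V W; rewrite !inE => /andP[/andP[sub_V _] _] /andP[/andP[sub_W _] _] e.
by rewrite -(qmap_preimageK sub_V) -(qmap_preimageK sub_W) e.
Qed.

End Quotient.

Lemma card_saturated_split (T : finType) (S : pred {set T}) (a b : T) :
  #|[set P | S P && ((a \in P) == (b \in P))]| +
    #|[set P | S P && (a \in P) && (b \notin P)]| =
  #|[set P | S P && (a \in P) && (b \in P)]| + #|[set P | S P && (b \notin P)]|.
Proof.
set A := [set P : {set T} | a \in P].
rewrite -(cardsID A [set P | S P && ((a \in P) == (b \in P))]).
rewrite -(cardsID A [set P | S P && (b \notin P)]).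
have -> : [set P | S P && ((a \in P) == (b \in P))] :\: A =
          [set P | S P && (b \notin P)] :\: A.
  apply/setP => P; rewrite !inE.
  by case: (a \in P); case: (b \in P); rewrite ?andbF.
have -> : [set P | S P && ((a \in P) == (b \in P))] :&: A =
          [set P | S P && (a \in P) && (b \in P)].
  by apply/setP => P; rewrite !inE; case: (a \in P); rewrite ?andbT ?andbF.
have -> : [set P | S P && (b \notin P)] :&: A =
          [set P | S P && (a \in P) && (b \notin P)].
  by apply/setP => P; rewrite !inE andbAC.
lia.
Qed.

Lemma mem_window_of_le1 (N U l u : nat) :
  l <= 1 -> u <= 1 -> N + u = l + U -> N \in [:: U.-1; U.-1.+1; U.-1.+2].
Proof. by rewrite !inE; lia. Qed.

Theorem theorem2 (m : nat) (hm : 1 <= m) (tau : {set {set 'I_m.+1}})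
  (htop : is_topology tau) (k : nat) (hk : 1 <= k) :
  exists s : nat, forall i : 'I_m.+1,
    i != ord_max -> i \notin old_points tau ord_max k ->
    num_new_open_ksets tau ord_max k i \in [:: s; s.+1; s.+2].
Proof.
exists #|[set P | new_ksystem tau ord_max k P && (ord_max \notin P)]|.-1.
move=> i i_neq_n i_not_old.
have lower_through_i :
    #|[set P | new_ksystem tau ord_max k P && (i \in P) && (ord_max \in P)]|
    <= 1.
  apply: (card_ksystems_through_new_point htop i_neq_n i_not_old) => [P|P Q].
    by rewrite inE => /andP[/andP[/andP[-> _] ->] _].
  by rewrite !inE => /andP[_ ->] /andP[_ ->].
have upper_through_i :
    #|[set P | new_ksystem tau ord_max k P && (i \in P) && (ord_max \notin P)]|
    <= 1.
  apply: (card_ksystems_through_new_point htop i_neq_n i_not_old) => [P|P Q].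
    by rewrite inE => /andP[/andP[/andP[-> _] ->] _].
  by rewrite !inE => /andP[_ /negbTE->] /andP[_ /negbTE->].
rewrite num_new_open_ksets_saturated //.
exact: mem_window_of_le1 lower_through_i upper_through_i
                         (card_saturated_split _ _ _).
Qed.
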